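(* Assume $\sigma_1$ consists of simple eigenvalues and let $N\ge N_1$ be such that $\lambda_m^k\ne0$ for $|k|\ge N$. For $1\le m\le\ell_1$, $|k|\ge N$ let $\varphi_m^k=((I-e^{-\lambda_m^k}A_{-1})x_m^k,e^{\lambda_m^k\theta}x_m^k)$ and $\psi_m^k=\big(y_m^k,[\overline{\lambda_m^k}e^{-\overline{\lambda_m^k}\theta}-A_2^*(\theta)+e^{-\overline{\lambda_m^k}\theta}\int_0^\theta e^{\overline{\lambda_m^k}s}(A_3^*(s)+\overline{\lambda_m^k}A_2^*(s))ds]y_m^k\big)$, with $x_m^k\in\ker\Delta(\lambda_m^k)$, $y_m^k\in\ker\Delta^*(\overline{\lambda_m^k})$, $\|x_m^k\|=\|y_m^k\|=1$. Then there is a constant $C>0$ such that $\|\varphi_m^k\|_{M_2}\le C$ and $\frac{1}{|\lambda_m^k|}\|\psi_m^k\|_{M_2}\le C$ for all $1\le m\le\ell_1$, $|k|\ge N$.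
   Context: Setting: $n\ge1$, $A_{-1}\in\mathbb C^{n\times n}$, $A_2,A_3\in L_2([-1,0];\mathbb C^{n\times n})$; $M_2=\mathbb C^n\times L_2(-1,0;\mathbb C^n)$ with the product inner product. $\Delta(\lambda)=-\lambda I+\lambda e^{-\lambda}A_{-1}+\lambda\int_{-1}^0e^{\lambda s}A_2(s)ds+\int_{-1}^0e^{\lambda s}A_3(s)ds$, $\Delta^*(\lambda)$ the same with conjugate transposes. Spectral notation: $\mu_1,\dots,\mu_\ell$ distinct eigenvalues of $A_{-1}$ (possibly $\det A_{-1}=0$), $\sigma_1=\sigma(A_{-1})\cap\{|\mu|=1\}=\{\mu_1,\dots,\mu_{\ell_1}\}$; ''$\sigma_1$ consists of simple eigenvalues'' means each $\mu_m$, $m\le\ell_1$, has algebraic multiplicity $1$. $\tilde\lambda_m^k=\mathrm i(\arg\mu_m+2\pi k)$. Known: there are $N_1$ and radii $r^{(k)}$ with $\sum_k(r^{(k)})^2<\infty$ such that for $m\le\ell_1$, $|k|\ge N_1$ the disc of radius $r^{(k)}$ about $\tilde\lambda_m^k$ contains exactly one root (with multiplicity) $\lambda_m^k$ of $\det\Delta$, a simple eigenvalue of the associated operator, with $|\lambda_m^k-\tilde\lambda_m^k|\to0$. *)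

From HB Require Import structures.
From mathcomp Require Import all_boot all_order all_algebra.
From mathcomp Require Import all_classical all_reals all_analysis.
From mathcomp Require Import complex.

Set Implicit Arguments.
Unset Strict Implicit.
Unset Printing Implicit Defensive.

Import Order.TTheory GRing.Theory Num.Theory.
Local Open Scope classical_set_scope.
Local Open Scope ring_scope.

Definition cabs {R : realType} (z : R[i]) : R := ComplexField.Normc.normc z.

Definition expC {R : realType} (z : R[i]) : R[i] :=
  (expR (complex.Re z))%:C%C * Complex (cos (complex.Im z)) (sin (complex.Im z)).

(* principal argument, with values in (-pi, pi] *)
Definition argC {R : realType} (z : R[i]) : R :=
  if 0 <= complex.Im z then acos (complex.Re z / cabs z) else - acos (complex.Re z / cabs z).

Definition RtoC {R : realType} (t : R) : R[i] := Complex t 0.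

Definition intC {R : realType} (a b : R) (f : R -> R[i]) : R[i] :=
  Complex (Rintegral lebesgue_measure `[a, b] (fun t => complex.Re (f t)))
          (Rintegral lebesgue_measure `[a, b] (fun t => complex.Im (f t))).

Definition intM {R : realType} (n : nat) (a b : R) (F : R -> 'M[R[i]]_n)
  : 'M[R[i]]_n := \matrix_(i, j) intC a b (fun t => F t i j).

(* oriented integral  \int_0^t F(s) ds  for t <= 0, i.e. - \int_[t,0] *)
Definition intM0 {R : realType} (n : nat) (t : R) (F : R -> 'M[R[i]]_n)
  : 'M[R[i]]_n := - intM t 0 F.

Definition adjM {R : realType} (n : nat) (A : 'M[R[i]]_n) : 'M[R[i]]_n :=
  (map_mx conjc A)^T.

Definition measC {R : realType} (f : R -> R[i]) : Prop :=
  measurable_fun `[(-1 : R)%R, 0%R] (fun t => complex.Re (f t)) /\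
  measurable_fun `[(-1 : R)%R, 0%R] (fun t => complex.Im (f t)).

Definition L2fun {R : realType} (f : R -> R[i]) : Prop :=
  measC f /\
  (\int[lebesgue_measure]_(t in `[(-1 : R)%R, 0%R]) ((cabs (f t)) ^+ 2)%:E < +oo)%E.

Definition L2mx {R : realType} (n : nat) (A : R -> 'M[R[i]]_n) : Prop :=
  forall i j, L2fun (fun t => A t i j).

Definition Delta {R : realType} (n : nat) (Am1 : 'M[R[i]]_n)
  (A2 A3 : R -> 'M[R[i]]_n) (l : R[i]) : 'M[R[i]]_n :=
  - (l%:M) + (l * expC (- l)) *: Am1
  + l *: intM (-1) 0 (fun s => expC (l * RtoC s) *: A2 s)
  + intM (-1) 0 (fun s => expC (l * RtoC s) *: A3 s).

Definition DeltaS {R : realType} (n : nat) (Am1 : 'M[R[i]]_n)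
  (A2 A3 : R -> 'M[R[i]]_n) (l : R[i]) : 'M[R[i]]_n :=
  Delta (adjM Am1) (fun s => adjM (A2 s)) (fun s => adjM (A3 s)) l.

Definition vnorm {R : realType} (n : nat) (v : 'cV[R[i]]_n) : R :=
  Num.sqrt (\sum_i (cabs (v i 0)) ^+ 2).

(* squared norm in M_2 = C^n x L_2(-1,0;C^n) of the pair (v, f) *)
Definition M2sq {R : realType} (n : nat) (v : 'cV[R[i]]_n)
  (f : R -> 'cV[R[i]]_n) : \bar R :=
  (((vnorm v) ^+ 2)%:E +
   \int[lebesgue_measure]_(t in `[(-1 : R)%R, 0%R]) (((vnorm (f t)) ^+ 2)%:E))%E.

Definition tlam {R : realType} (mu : R[i]) (k : int) : R[i] :=
  Complex 0 (argC mu + 2 * pi * k%:~R).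

Definition phi_v {R : realType} (n : nat) (Am1 : 'M[R[i]]_n) (l : R[i])
  (x : 'cV[R[i]]_n) : 'cV[R[i]]_n :=
  (1%:M - expC (- l) *: Am1) *m x.

Definition phi_f {R : realType} (n : nat) (l : R[i]) (x : 'cV[R[i]]_n)
  : R -> 'cV[R[i]]_n :=
  fun t => expC (l * RtoC t) *: x.

Definition psi_f {R : realType} (n : nat) (A2 A3 : R -> 'M[R[i]]_n)
  (l : R[i]) (y : 'cV[R[i]]_n) : R -> 'cV[R[i]]_n :=
  fun t =>
    let lb := conjc l in
    (((lb * expC (- lb * RtoC t)) *: 1%:M) - adjM (A2 t)
     + expC (- lb * RtoC t) *:
         intM0 t (fun s => expC (lb * RtoC s) *:
                             (adjM (A3 s) + lb *: adjM (A2 s)))) *m y.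

(* z is a root of multiplicity exactly one of f : C -> C (f complex
   differentiable at z with nonzero derivative) *)
Definition simple_rootC {R : realType} (f : R[i] -> R[i]) (z : R[i]) : Prop :=
  f z = 0 /\
  exists d : R[i], d != 0 /\
    forall eps : R, 0 < eps -> exists delta : R, 0 < delta /\
      forall h : R[i], 0 < cabs h < delta ->
        cabs ((f (z + h) - f z) / h - d) < eps.

From HB Require Import structures.
From mathcomp Require Import all_boot all_order all_algebra.
From mathcomp Require Import all_classical all_reals all_analysis.
From mathcomp Require Import complex.
From mathcomp Require Import ring lra zify measurable_realfun.
Import Order.TTheory GRing.Theory Num.Theory.
Local Open Scope classical_set_scope.
Local Open Scope ring_scope.

(* Since |lam_m^k - tlam_m^k| < r^(k) and square-summable radii are bounded, all the
   lam_m^k lie in a vertical strip |Re z| <= rho, so every exponential e^{lam theta},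
   theta in [-1, 0], is bounded by e^rho.  This bounds phi_m^k outright, and bounds the
   matrix in psi_m^k entrywise by an affine function of |lam| plus |A_2(theta)|, whence
   |psi_m^k|^2 <= a + b |lam|^2 by square integrability of A_2 and A_3.  Finally
   |lam_m^k| is bounded away from 0: for large |k| because Im lam_m^k stays within
   rho + |arg mu_m| of 2 pi k, and for the finitely many other k because lam_m^k <> 0. *)

Lemma ler_1Dsqr {R : realFieldType} (a : R) : a <= 1 + a ^+ 2.
Proof. have := sqr_ge0 a; have := sqr_ge0 (a - 1); rewrite sqrrB; lra. Qed.

Section ComplexModulus.
Context {R : realType}.
Implicit Types (z w : R[i]) (a b rho t : R).

Lemma cabs_ge0 z : 0 <= cabs z.
Proof. by case: z => a b; exact: sqrtr_ge0. Qed.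

Lemma sqr_cabs z : cabs z ^+ 2 = complex.Re z ^+ 2 + complex.Im z ^+ 2.
Proof. by case: z => a b; rewrite /cabs /= sqr_sqrtr // addr_ge0 // sqr_ge0. Qed.

Lemma cabsM z w : cabs (z * w) = cabs z * cabs w.
Proof. exact: ComplexField.Normc.normcM. Qed.

Lemma cabsD z w : cabs (z + w) <= cabs z + cabs w.
Proof. exact: le_normcD. Qed.

Lemma cabsN z : cabs (- z) = cabs z.
Proof. exact: normcN. Qed.

Lemma cabsB z w : cabs (z - w) <= cabs z + cabs w.
Proof. by rewrite -(cabsN w); exact: cabsD. Qed.

Lemma cabs_conj z : cabs z^*%C = cabs z.
Proof. by case: z => a b; rewrite /cabs /= sqrrN. Qed.

Lemma cabs_sum I (s : seq I) (P : pred I) (F : I -> R[i]) :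
  cabs (\sum_(i <- s | P i) F i) <= \sum_(i <- s | P i) cabs (F i).
Proof.
apply: (big_ind2 (fun z a => cabs z <= a)) => //.
- by rewrite /cabs /= expr0n addr0 sqrtr0.
- by move=> z1 z2 a1 a2 h1 h2; apply: le_trans (cabsD _ _) (lerD h1 h2).
Qed.

Lemma cabs_natb (b : bool) : cabs ((1 : R[i]) *+ b) <= 1.
Proof. by case: b; rewrite /cabs /= ?expr0n ?expr1n ?addr0 ?sqrtr1 ?sqrtr0. Qed.

Lemma normr_Re_le z : `|complex.Re z| <= cabs z.
Proof.
by case: z => a b; rewrite /cabs /= -sqrtr_sqr ler_wsqrtr // lerDl sqr_ge0.
Qed.

Lemma normr_Im_le z : `|complex.Im z| <= cabs z.
Proof.
by case: z => a b; rewrite /cabs /= -sqrtr_sqr ler_wsqrtr // lerDr sqr_ge0.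
Qed.

Lemma cabs_Complex_le a b : cabs (Complex a b) <= `|a| + `|b|.
Proof.
rewrite /cabs /= -[`|a| + `|b|]ger0_norm ?addr_ge0 // -sqrtr_sqr ler_wsqrtr //.
rewrite sqrrD !real_normK ?num_real //.
have := mulr_ge0 (normr_ge0 a) (normr_ge0 b); lra.
Qed.

Lemma cabs_expC z : cabs (expC z) = expR (complex.Re z).
Proof.
rewrite /expC cabsM /cabs /= expr0n addr0 sqrtr_sqr cos2Dsin2 sqrtr1 mulr1.
by rewrite ger0_norm ?expR_ge0.
Qed.

Lemma cabs_expC_le z rho : `|complex.Re z| <= rho -> cabs (expC z) <= expR rho.
Proof. by move=> h; rewrite cabs_expC ler_expR (le_trans (ler_norm _) h). Qed.

Lemma cabs_expC_mulRtoC_le z t rho : `|complex.Re z| <= rho -> -1 <= t <= 0 ->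
  cabs (expC (z * RtoC t)) <= expR rho.
Proof.
move=> hz /andP[t1 t0]; apply: cabs_expC_le; apply: le_trans hz.
case: z => a b; rewrite /RtoC /= mulr0 subr0 normrM.
by rewrite ler_piMr // ler_norml; apply/andP; split; lra.
Qed.

End ComplexModulus.

Section VectorNorm.
Context {R : realType} {n : nat}.
Implicit Types (v : 'cV[R[i]]_n) (M : 'M[R[i]]_n).

Lemma vnorm_ge0 v : 0 <= vnorm v.
Proof. exact: sqrtr_ge0. Qed.

Lemma sqr_vnorm v : vnorm v ^+ 2 = \sum_i cabs (v i 0) ^+ 2.
Proof. by rewrite /vnorm sqr_sqrtr // sumr_ge0 // => i _; exact: sqr_ge0. Qed.

Lemma sqr_vnormZ (c : R[i]) v : vnorm (c *: v) ^+ 2 = cabs c ^+ 2 * vnorm v ^+ 2.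
Proof.
rewrite !sqr_vnorm mulr_sumr; apply: eq_bigr => i _.
by rewrite mxE cabsM exprMn.
Qed.

Lemma cabs_le_vnorm v j : cabs (v j 0) <= vnorm v.
Proof.
rewrite /vnorm -[cabs _]ger0_norm ?cabs_ge0 // -sqrtr_sqr ler_wsqrtr //.
rewrite (bigD1 j) //= lerDl; apply: sumr_ge0 => i _; exact: sqr_ge0.
Qed.

(* The crude constant n^3 (instead of n^2 from Cauchy-Schwarz) keeps the proof elementary. *)
Lemma sqr_vnorm_mulmx_le M v c : 0 <= c -> (forall i j, cabs (M i j) ^+ 2 <= c) ->
  vnorm (M *m v) ^+ 2 <= n%:R ^+ 3 * c * vnorm v ^+ 2.
Proof.
move=> c0 hM.
have hMij i j : cabs (M i j) <= Num.sqrt c.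
  by rewrite -[cabs _]ger0_norm ?cabs_ge0 // -sqrtr_sqr ler_wsqrtr.
have hrow i : cabs ((M *m v) i 0) <= n%:R * Num.sqrt c * vnorm v.
  rewrite mxE; apply: le_trans (cabs_sum _ _ _ _) _.
  apply: (@le_trans _ _ (\sum_(j < n) Num.sqrt c * vnorm v)).
    apply: ler_sum => j _; rewrite cabsM.
    by apply: ler_pM; rewrite ?cabs_ge0 ?hMij ?cabs_le_vnorm.
  by rewrite sumr_const card_ord -mulrnAl -mulr_natl.
rewrite sqr_vnorm; apply: (@le_trans _ _ (\sum_(i < n) (n%:R * Num.sqrt c * vnorm v) ^+ 2)).
  apply: ler_sum => i _.
  by rewrite ler_sqr ?nnegrE ?hrow ?cabs_ge0 // !mulr_ge0 ?sqrtr_ge0 ?vnorm_ge0.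
rewrite sumr_const card_ord !exprMn sqr_sqrtr //.
by rewrite le_eqVlt; apply/orP; left; apply/eqP; ring.
Qed.

Definition frob2 M : R := \sum_i \sum_j cabs (M i j) ^+ 2.

Lemma frob2_ge0 M : 0 <= frob2 M.
Proof. by apply: sumr_ge0 => i _; apply: sumr_ge0 => j _; exact: sqr_ge0. Qed.

Lemma sqr_cabs_le_frob2 M i j : cabs (M i j) ^+ 2 <= frob2 M.
Proof.
rewrite /frob2 (bigD1 i) //= (bigD1 j) //= -addrA lerDl addr_ge0 //.
  by apply: sumr_ge0 => k _; exact: sqr_ge0.
by apply: sumr_ge0 => k _; apply: sumr_ge0 => l _; exact: sqr_ge0.
Qed.

Lemma cabs_le_frob2 M i j : cabs (M i j) <= 1 + frob2 M.
Proof. by apply: le_trans (ler_1Dsqr _) _; rewrite lerD2l sqr_cabs_le_frob2. Qed.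

End VectorNorm.

Section NonnegIntegral.
Context d (T : measurableType d) {R : realType} (mu : {measure set T -> \bar R}).
Local Open Scope ereal_scope.

(* No measurability is needed: nonnegative integrals are suprema over simple functions. *)
Lemma ge0_le_integral_subset (D1 D2 : set T) (f1 f2 : T -> \bar R) :
  (forall x, D1 x -> 0 <= f1 x) -> (forall x, D2 x -> 0 <= f2 x) ->
  (forall x, D1 x -> D2 x /\ f1 x <= f2 x) ->
  \int[mu]_(x in D1) f1 x <= \int[mu]_(x in D2) f2 x.
Proof.
move=> f10 f20 f12; rewrite !ge0_integralE //.
apply: ereal_sup_le => _ [h /= hf1 <-]; exists h => //= x.
apply: le_trans (hf1 x) _; rewrite /patch; case: ifPn => [/set_mem D1x|_].
  by have [D2x le12] := f12 _ D1x; rewrite mem_set.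
by case: ifPn => // /set_mem; exact: f20.
Qed.

Lemma normr_Rintegral_le (D : set T) (f : T -> R) (M : R) :
  \int[mu]_(x in D) `|f x|%:E <= M%:E -> (`|Rintegral mu D f| <= M)%R.
Proof.
move=> hM; rewrite /Rintegral integralE.
have hpart (g : T -> \bar R) : (forall x, 0 <= g x) ->
    (forall x, g x <= `|(EFin \o f) x|) ->
    0 <= \int[mu]_(x in D) g x <= M%:E.
  move=> g0 gf; rewrite integral_ge0 //=; apply: le_trans hM.
  by apply: ge0_le_integral_subset.
have fabs x : `|(EFin \o f) x| = (EFin \o f)^\+ x + (EFin \o f)^\- x.
  exact: (congr1 (fun g => g x) (fune_abse (EFin \o f))).
have /andP[p0 pM] : 0 <= \int[mu]_(x in D) (EFin \o f)^\+ x <= M%:E.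
  by apply: hpart => [x|x]; rewrite ?funepos_ge0 // fabs leeDl // funeneg_ge0.
have /andP[q0 qM] : 0 <= \int[mu]_(x in D) (EFin \o f)^\- x <= M%:E.
  by apply: hpart => [x|x]; rewrite ?funeneg_ge0 // fabs leeDr // funepos_ge0.
move: p0 pM q0 qM.
set p := \int[mu]_(x in D) _^\+ x; set q := \int[mu]_(x in D) _^\- x.
move=> p0 pM q0 qM.
have fp : p \is a fin_num by rewrite ge0_fin_numE // (le_lt_trans pM) ?ltry.
have fq : q \is a fin_num by rewrite ge0_fin_numE // (le_lt_trans qM) ?ltry.
rewrite -(fineK fp) -(fineK fq) -EFinB /= !lee_fin in p0 pM q0 qM *.
by rewrite ler_norml; apply/andP; split; lra.
Qed.

End NonnegIntegral.

Section UnitInterval.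
Context {R : realType}.
Local Notation D := (`[(-1 : R)%R, 0%R]%classic : set R).

Lemma measurable_itv_m10 : measurable D.
Proof. exact: measurable_itv. Qed.

Lemma integral_itv_m10_cst (c : R) : (\int[lebesgue_measure]_(t in D) c%:E = c%:E)%E.
Proof.
have mD : lebesgue_measure D = 1%:E.
  by rewrite lebesgue_measure_itv /= lte_fin ltrN10 -EFinD opprK add0r.
by rewrite integral_cst ?measurable_itv_m10 // [X in (_ * X)%E](_ : _ = 1%:E) ?mule1.
Qed.

Lemma integral_itv_m10_affine (a b J : R) (g : R -> R) :
  0 <= a -> 0 <= b -> measurable_fun D g -> (forall t, D t -> 0 <= g t) ->
  (\int[lebesgue_measure]_(t in D) (g t)%:E = J%:E)%E ->
  (\int[lebesgue_measure]_(t in D) (a + b * g t)%:E = (a + b * J)%:E)%E.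
Proof.
move=> a0 b0 mg g0 gJ.
under eq_integral => t _ do rewrite EFinD EFinM.
rewrite ge0_integralD ?measurable_itv_m10 //; last 2 first.
- by move=> t Dt; rewrite -EFinM lee_fin mulr_ge0 ?g0.
- by apply/measurable_EFinP; apply: measurable_funM => //; exact: measurable_cst.
rewrite ge0_integralZl_EFin ?measurable_itv_m10 //; last exact/measurable_EFinP.
by rewrite integral_itv_m10_cst gJ -EFinM -EFinD.
Qed.

Lemma cabs_intC_le (t H : R) (f : R -> R[i]) (h : R -> R) :
  -1 <= t -> (forall s, D s -> 0 <= h s) ->
  (forall s, t <= s <= 0 -> cabs (f s) <= h s) ->
  (\int[lebesgue_measure]_(s in D) (h s)%:E = H%:E)%E ->
  cabs (intC t 0 f) <= 2 * H.
Proof.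
move=> t1 h0 fh hH.
have sub s : `[t, 0]%classic s -> D s /\ t <= s <= 0.
  by rewrite /= !in_itv /= => /andP[ts s0]; rewrite ts s0 (le_trans t1 ts).
have part (p : R[i] -> R) : (forall z, `|p z| <= cabs z) ->
    `|Rintegral lebesgue_measure `[t, 0]%classic (fun s => p (f s))| <= H.
  move=> pz; apply: normr_Rintegral_le; rewrite -hH.
  apply: ge0_le_integral_subset => [s _|s Ds|s /sub [Ds ts]].
  - by rewrite lee_fin.
  - by rewrite lee_fin h0.
  - by split; rewrite // lee_fin (le_trans (pz _) (fh _ ts)).
apply: le_trans (cabs_Complex_le _ _) _.
by rewrite mulr2n mulrDl mul1r lerD // part // => z; [exact: normr_Re_le|exact: normr_Im_le].
Qed.

End UnitInterval.

Section SquareIntegrable.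
Context {R : realType} {n : nat}.
Local Notation D := (`[(-1 : R)%R, 0%R]%classic : set R).

Lemma measurable_sqr_cabs (f : R -> R[i]) :
  measC f -> measurable_fun D (fun t => cabs (f t) ^+ 2).
Proof.
move=> [mRe mIm]; rewrite (_ : (fun t => _) = fun t =>
  complex.Re (f t) ^+ 2 + complex.Im (f t) ^+ 2); last first.
  by apply/funext => t; rewrite sqr_cabs.
by apply: measurable_funD; exact: measurable_funX.
Qed.

Lemma measurable_frob2 (A : R -> 'M[R[i]]_n) :
  L2mx A -> measurable_fun D (fun t => frob2 (A t)).
Proof.
move=> hA; apply: (measurable_sum _ (h := fun i t => \sum_j cabs (A t i j) ^+ 2)) => i.
apply: (measurable_sum _ (h := fun j t => cabs (A t i j) ^+ 2)) => j.
exact: measurable_sqr_cabs (hA i j).1.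
Qed.

Lemma frob2_integral_lty (A : R -> 'M[R[i]]_n) : L2mx A ->
  (\int[lebesgue_measure]_(t in D) (frob2 (A t))%:E < +oo)%E.
Proof.
move=> hA; under eq_integral => t _ do rewrite /frob2 -sumEFin.
rewrite ge0_integral_sum ?measurable_itv_m10 //; last 2 first.
- move=> i; apply/measurable_EFinP.
  apply: (measurable_sum _ (h := fun j t => cabs (A t i j) ^+ 2)) => j.
  exact: measurable_sqr_cabs (hA i j).1.
- by move=> i t _; rewrite lee_fin sumr_ge0 // => j _; exact: sqr_ge0.
apply: lte_sum_pinfty => i _; under eq_integral => t _ do rewrite -sumEFin.
rewrite ge0_integral_sum ?measurable_itv_m10 //; last 2 first.
- by move=> j; apply/measurable_EFinP; exact: measurable_sqr_cabs (hA i j).1.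
- by move=> j t _; rewrite lee_fin sqr_ge0.
by apply: lte_sum_pinfty => j _; exact: (hA i j).2.
Qed.

End SquareIntegrable.

Section PsiBound.
Context {R : realType} {n : nat} (A2 A3 : R -> 'M[R[i]]_n) (rho : R).
Hypotheses (hA2 : L2mx A2) (hA3 : L2mx A3).
Local Notation D := (`[(-1 : R)%R, 0%R]%classic : set R).

Definition psi_mx (l : R[i]) (t : R) : 'M[R[i]]_n :=
  let lb := l^*%C in
  (lb * expC (- lb * RtoC t)) *: 1%:M - adjM (A2 t)
  + expC (- lb * RtoC t) *: intM0 t (fun s => expC (lb * RtoC s) *:
                                         (adjM (A3 s) + lb *: adjM (A2 s))).

Let psi_fE l y t : psi_f A2 A3 l y t = psi_mx l t *m y.
Proof. by []. Qed.

Let E := expR rho.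
Let G t := frob2 (A2 t) + frob2 (A3 t).
Let J := fine (\int[lebesgue_measure]_(t in D) (G t)%:E)%E.

Let E_ge0 : 0 <= E. Proof. exact: expR_ge0. Qed.

Let G_ge0 t : 0 <= G t. Proof. by rewrite addr_ge0 ?frob2_ge0. Qed.

Let measurable_G : measurable_fun D G.
Proof. by apply: measurable_funD; [exact: measurable_frob2 hA2|exact: measurable_frob2 hA3]. Qed.

Let integral_G : (\int[lebesgue_measure]_(t in D) (G t)%:E = J%:E)%E.
Proof.
have G_lty : (\int[lebesgue_measure]_(t in D) (G t)%:E < +oo)%E.
  under eq_integral => t _ do rewrite EFinD.
  rewrite ge0_integralD ?measurable_itv_m10 //.
  - by rewrite lte_add_pinfty // frob2_integral_lty.
  - by move=> t _; rewrite lee_fin frob2_ge0.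
  - by apply/measurable_EFinP; exact: measurable_frob2 hA2.
  - by move=> t _; rewrite lee_fin frob2_ge0.
  - by apply/measurable_EFinP; exact: measurable_frob2 hA3.
rewrite fineK // ge0_fin_numE // integral_ge0 // => t _.
by rewrite lee_fin.
Qed.

Let J_ge0 : 0 <= J.
Proof. by rewrite fine_ge0 // integral_ge0 // => t _; rewrite lee_fin. Qed.

Let P (l : R[i]) := cabs l * E + E * (2 * (E * (1 + cabs l) + E * (1 + cabs l) * J)).

Let cabs_psi_integrand_le l s i j : `|complex.Re l| <= rho -> -1 <= s <= 0 ->
  cabs ((expC (l^*%C * RtoC s) *: (adjM (A3 s) + l^*%C *: adjM (A2 s))) i j)
  <= E * (1 + cabs l) + E * (1 + cabs l) * G s.
Proof.
move=> hl hs; rewrite /adjM !mxE cabsM.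
have hE : cabs (expC (l^*%C * RtoC s)) <= E.
  by apply: cabs_expC_mulRtoC_le hs; case: l hl.
have hA : cabs ((A3 s j i)^*%C + l^*%C * (A2 s j i)^*%C)
          <= (1 + frob2 (A3 s)) + cabs l * (1 + frob2 (A2 s)).
  apply: le_trans (cabsD _ _) _; rewrite cabsM !cabs_conj.
  by rewrite lerD ?cabs_le_frob2 // ler_wpM2l ?cabs_ge0 ?cabs_le_frob2.
have := cabs_ge0 l; have := frob2_ge0 (A2 s); have := frob2_ge0 (A3 s).
rewrite /G => f3 f2 l0.
rewrite -mulrA -mulrDr; apply: ler_pM; rewrite ?cabs_ge0 //.
by apply: le_trans hA _; nra.
Qed.

Let cabs_psi_mx_le l t i j : `|complex.Re l| <= rho -> -1 <= t <= 0 ->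
  cabs (psi_mx l t i j) <= P l + cabs (A2 t j i).
Proof.
move=> hl /[dup] ht /andP[t1 t0].
have hE : cabs (expC (- l^*%C * RtoC t)) <= E.
  by apply: cabs_expC_mulRtoC_le ht; case: l hl => a b; rewrite /= normrN.
have hint : cabs (intC t 0 (fun s => (expC (l^*%C * RtoC s) *:
    (adjM (A3 s) + l^*%C *: adjM (A2 s))) i j))
    <= 2 * (E * (1 + cabs l) + E * (1 + cabs l) * J).
  apply: (cabs_intC_le _ _ _ (fun s => E * (1 + cabs l) + E * (1 + cabs l) * G s)) => //.
  - by move=> s _; rewrite addr_ge0 ?mulr_ge0 ?addr_ge0 ?cabs_ge0 ?frob2_ge0.
  - move=> s /andP[ts s0]; apply: cabs_psi_integrand_le => //.
    by rewrite s0 (le_trans t1 ts).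
  - by rewrite (integral_itv_m10_affine _ _ _ _ _ _ measurable_G _ integral_G)
      ?mulr_ge0 ?addr_ge0 ?cabs_ge0.
rewrite /psi_mx /intM0 /intM !mxE.
apply: le_trans (cabsD _ _) _; rewrite /P addrAC lerD //.
  apply: le_trans (cabsB _ _) _; rewrite cabs_conj lerD // cabsM cabsM cabs_conj.
  by rewrite -[X in _ <= X]mulr1 ler_pM ?mulr_ge0 ?cabs_ge0 ?ler_wpM2l ?cabs_ge0 // cabs_natb.
by rewrite cabsM cabsN ler_pM ?cabs_ge0.
Qed.

Let sqr_vnorm_psi_le l y t : `|complex.Re l| <= rho -> vnorm y = 1 -> D t ->
  vnorm (psi_f A2 A3 l y t) ^+ 2 <= 2 * n%:R ^+ 3 * P l ^+ 2 + 2 * n%:R ^+ 3 * G t.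
Proof.
move=> hl hy; rewrite /= in_itv /= => ht.
rewrite psi_fE; apply: le_trans (sqr_vnorm_mulmx_le _ _ (2 * P l ^+ 2 + 2 * G t) _ _) _.
- by apply: addr_ge0; apply: mulr_ge0; rewrite ?sqr_ge0 ?G_ge0.
- move=> i j; have hx := cabs_psi_mx_le _ _ i j hl ht.
  have hx2 : cabs (psi_mx l t i j) ^+ 2 <= (P l + cabs (A2 t j i)) ^+ 2.
    by rewrite ler_sqr ?nnegrE ?cabs_ge0 // (le_trans _ hx) ?cabs_ge0.
  have := sqr_ge0 (P l - cabs (A2 t j i)); have := sqr_cabs_le_frob2 (A2 t) j i.
  have := frob2_ge0 (A3 t); rewrite /G sqrrD sqrrB in hx2 *; lra.
by rewrite hy expr1n mulr1 le_eqVlt; apply/orP; left; apply/eqP; ring.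
Qed.

Lemma psi_M2sq_le : exists a b : R, 0 <= a /\ 0 <= b /\
  forall l y, `|complex.Re l| <= rho -> vnorm y = 1 ->
  (M2sq y (psi_f A2 A3 l y) <= (a + b * cabs l ^+ 2)%:E)%E.
Proof.
set c : R := 2 * n%:R ^+ 3.
set alpha := E + 2 * E ^+ 2 * (1 + J); set beta := 2 * E ^+ 2 * (1 + J).
have c0 : 0 <= c by rewrite mulr_ge0 ?exprn_ge0.
exists (1 + c * J + 2 * c * beta ^+ 2), (2 * c * alpha ^+ 2).
split; first by have := sqr_ge0 beta; have := J_ge0; nra.
split; first by have := sqr_ge0 alpha; nra.
move=> l y hl hy.
have hint : (\int[lebesgue_measure]_(t in D) ((vnorm (psi_f A2 A3 l y t)) ^+ 2)%:E
    <= (c * P l ^+ 2 + c * J)%:E)%E.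
  rewrite -(integral_itv_m10_affine _ _ _ _ _ _ measurable_G _ integral_G); last 3 first.
  - by apply: mulr_ge0; rewrite ?sqr_ge0.
  - exact: c0.
  - by move=> t _; exact: G_ge0.
  apply: ge0_le_integral_subset => [t _|t _|t Dt]; rewrite ?lee_fin ?sqr_ge0 //.
    by apply: addr_ge0; apply: mulr_ge0; rewrite ?sqr_ge0 ?G_ge0.
  by split=> //; exact: sqr_vnorm_psi_le.
rewrite /M2sq hy expr1n; apply: le_trans (leeD (lexx _) hint) _.
rewrite -EFinD lee_fin.
have hP : P l = alpha * cabs l + beta by rewrite /P /alpha /beta; ring.
have := sqr_ge0 (alpha * cabs l - beta); rewrite hP.
have := cabs_ge0 l; nra.
Qed.

End PsiBound.

Lemma phi_M2sq_le {R : realType} {n : nat} (Am1 : 'M[R[i]]_n) (l : R[i])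
    (x : 'cV[R[i]]_n) (rho : R) :
  `|complex.Re l| <= rho -> vnorm x = 1 ->
  (M2sq (phi_v Am1 l x) (phi_f l x)
   <= (n%:R ^+ 3 * (1 + expR rho * (1 + frob2 Am1)) ^+ 2 + expR rho ^+ 2)%:E)%E.
Proof.
move=> hl hx; have E0 := expR_ge0 rho.
rewrite /M2sq EFinD; apply: leeD.
  rewrite lee_fin /phi_v.
  apply: le_trans (sqr_vnorm_mulmx_le _ _ ((1 + expR rho * (1 + frob2 Am1)) ^+ 2) _ _) _.
  - exact: sqr_ge0.
  - have K0 : 0 <= 1 + expR rho * (1 + frob2 Am1).
      by rewrite addr_ge0 // mulr_ge0 // addr_ge0 ?frob2_ge0.
    move=> i j; rewrite ler_sqr ?nnegrE ?cabs_ge0 //.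
    rewrite !mxE; apply: le_trans (cabsB _ _) _; rewrite lerD ?cabs_natb // cabsM.
    apply: ler_pM; rewrite ?cabs_ge0 ?cabs_le_frob2 //.
    by apply: cabs_expC_le; case: l hl => a b; rewrite /= normrN.
  - by rewrite hx expr1n mulr1.
rewrite -(integral_itv_m10_cst (expR rho ^+ 2)).
apply: ge0_le_integral_subset => [t _|t _|t Dt]; rewrite ?lee_fin ?sqr_ge0 //.
split=> //; rewrite /phi_f sqr_vnormZ hx expr1n mulr1.
by rewrite ler_sqr ?nnegrE ?cabs_ge0 // cabs_expC_mulRtoC_le //.
Qed.

Lemma sqr_le_of_bounded_sums {R : realDomainType} (r : int -> R) (B : R) :
  (forall K : nat, \sum_(i < (K + K).+1) r (i%:Z - K%:Z) ^+ 2 <= B) ->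
  forall k, r k ^+ 2 <= B.
Proof.
move=> hB k; have [K [i hi]] : exists K (i : 'I_(K + K).+1), i%:Z - K%:Z = k.
  case: k => p; first by exists p, (Ordinal (ltnSn (p + p))); rewrite /= PoszD addrK.
  by exists p.+1, (Ordinal (ltn0Sn (p.+1 + p.+1))); rewrite /= sub0r NegzE.
apply: le_trans (hB K); rewrite (bigD1 i) //= hi lerDl.
by apply: sumr_ge0 => j _; exact: sqr_ge0.
Qed.

Section NearTlam.
Context {R : realType}.
Implicit Types (mu z : R[i]) (k : int) (rho : R).

Lemma normr_Re_le_cabs_sub_tlam mu z k : `|complex.Re z| <= cabs (z - tlam mu k).
Proof. by apply: le_trans (normr_Re_le _); case: z => a b; rewrite /= subr0. Qed.

Lemma cabs_ge1_near_tlam mu z k rho :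
  `|argC mu| + rho + 1 <= `|k%:~R| -> cabs (z - tlam mu k) <= rho -> 1 <= cabs z.
Proof.
move=> hk /(le_trans (normr_Im_le _)) hIm; apply: le_trans _ (normr_Im_le z).
have hpi : `|k%:~R| <= `|2 * pi * k%:~R| :> R.
  rewrite normrM ler_peMl ?normr_ge0 // ger0_norm ?mulr_ge0 ?pi_ge0 //.
  by have := pi_ge2 R; lra.
move: hIm hpi; case: z => a u; rewrite /tlam /=.
set w := 2 * pi * k%:~R; set th := argC mu => hIm hpi.
have hw : `|w| <= `|u| + `|th| + `|u - (th + w)|.
  rewrite [X in `|X| <= _](_ : w = u - th - (u - (th + w))); last by ring.
  apply: le_trans (ler_normB _ _) _; rewrite lerD2r.
  exact: ler_normB.
lra.
Qed.

End NearTlam.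

(* D is 1 plus the sum of the 1 / |lam m k| over the finitely many k with |k| < K. *)
Lemma cabs_lam_lower_bound {R : realType} {l1 N : nat} {mu : 'I_l1 -> R[i]}
    {lam : 'I_l1 -> int -> R[i]} {rho : R} :
  (forall m k, (N <= `|k|)%N -> cabs (lam m k - tlam (mu m) k) <= rho) ->
  (forall m k, (N <= `|k|)%N -> lam m k != 0) ->
  exists D : R, forall m k, (N <= `|k|)%N -> 1 <= D * cabs (lam m k).
Proof.
move=> hnear hnz.
set A := \sum_m `|argC (mu m)|.
have hA m : `|argC (mu m)| <= A.
  by rewrite /A (bigD1 m) //= lerDl sumr_ge0 // => j _; exact: normr_ge0.
set K := Num.Def.archi_bound (`|A + rho| + 1).
have hK : `|A + rho| + 1 < K%:R by apply: archi_boundP; rewrite addr_ge0.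
set S := \sum_m \sum_(i < (K + K).+1) (cabs (lam m (i%:Z - K%:Z)))^-1.
have S0 : 0 <= S.
  by do 2!apply: sumr_ge0 => ? _; rewrite invr_ge0 cabs_ge0.
exists (1 + S) => m k hk; have L0 := cabs_ge0 (lam m k).
have [Kk|kK] := leqP K `|k|.
  have L1 : 1 <= cabs (lam m k).
    apply: cabs_ge1_near_tlam (hnear m k hk).
    have := hA m; have := ler_norm (A + rho).
    have : K%:R <= `|k%:~R| :> R by rewrite -intr_norm -natr_absz ler_nat.
    lra.
  by rewrite mulrDl mul1r -[1]addr0 lerD // mulr_ge0.
have hL : cabs (lam m k) != 0.
  by apply: contra (hnz m k hk) => /eqP /ComplexField.Normc.eq0_normc ->.
have hinv : (cabs (lam m k))^-1 <= S.
  have hi : (absz (k + K%:Z)%R < (K + K).+1)%N by lia.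
  rewrite /S (bigD1 m) //= (bigD1 (Ordinal hi)) //=.
  rewrite (_ : _ - _ = k); last by lia.
  rewrite -addrA lerDl addr_ge0 //.
    by apply: sumr_ge0 => ? _; rewrite invr_ge0 cabs_ge0.
  by do 2!apply: sumr_ge0 => ? _; rewrite invr_ge0 cabs_ge0.
have : 1 <= S * cabs (lam m k) by rewrite -(mulVf hL) ler_wpM2r.
rewrite mulrDl mul1r; lra.
Qed.

Lemma affine_sqr_le_sqr_mul {R : realFieldType} (a b d L C : R) :
  0 <= a -> 0 <= b -> 1 <= d * L -> a * d ^+ 2 + b <= C -> 1 <= C ->
  a + b * L ^+ 2 <= (C * L) ^+ 2.
Proof.
move=> a0 b0 dL hC C1.
have dL2 : 1 <= (d * L) ^+ 2 by rewrite -[1](expr1n _ 2) ler_sqr ?nnegrE // (le_trans ler01).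
have L2 : 0 <= L ^+ 2 := sqr_ge0 L.
have : a <= a * d ^+ 2 * L ^+ 2 by rewrite -mulrA -exprMn ler_peMr.
have : (a * d ^+ 2 + b) * L ^+ 2 <= C * L ^+ 2 by rewrite ler_wpM2r.
have : C * L ^+ 2 <= C ^+ 2 * L ^+ 2.
  by rewrite ler_wpM2r // expr2 ler_peMr // (le_trans ler01).
rewrite exprMn; lra.
Qed.

Theorem lemma4 (R : realType) (n : nat) (n_gt0 : (0 < n)%N)
  (Am1 : 'M[R[i]]_n) (A2 A3 : R -> 'M[R[i]]_n)
  (hA2 : L2mx A2) (hA3 : L2mx A3)
  (* sigma_1 = sigma(A_{-1}) \cap {|mu| = 1} = {mu_1, ..., mu_l1}, distinct *)
  (l1 : nat) (mu : 'I_l1 -> R[i])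
  (hmu_inj : injective mu)
  (hsigma1 : forall z : R[i],
      (root (char_poly Am1) z /\ cabs z = 1) <-> exists m, z = mu m)
  (* sigma_1 consists of simple eigenvalues *)
  (hsimple : forall m, mup (mu m) (char_poly Am1) = 1%N)
  (* known facts: N_1, radii r^(k) with square-summable radii, and the roots
     lambda_m^k of det Delta *)
  (N1 : nat) (r : int -> R) (hr_pos : forall k, 0 < r k)
  (hr_sum : exists B : R, forall K : nat,
      \sum_(i < (K + K).+1) (r (i%:Z - K%:Z)) ^+ 2 <= B)
  (lam : 'I_l1 -> int -> R[i])
  (hlam_disc : forall m k, (N1 <= `|k|)%N ->
      cabs (lam m k - tlam (mu m) k) < r k)
  (hlam_root : forall m k, (N1 <= `|k|)%N ->
      simple_rootC (fun z => \det (Delta Am1 A2 A3 z)) (lam m k))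
  (hlam_unique : forall m k, (N1 <= `|k|)%N -> forall z : R[i],
      cabs (z - tlam (mu m) k) < r k -> \det (Delta Am1 A2 A3 z) = 0 ->
      z = lam m k)
  (hlam_lim : forall eps : R, 0 < eps -> exists K : nat, forall m k,
      (N1 <= `|k|)%N -> (K <= `|k|)%N ->
      cabs (lam m k - tlam (mu m) k) < eps)
  (* the statement proper *)
  (N : nat) (hN : (N1 <= N)%N)
  (hlam_nz : forall m k, (N <= `|k|)%N -> lam m k != 0)
  (x y : 'I_l1 -> int -> 'cV[R[i]]_n)
  (hx : forall m k, (N <= `|k|)%N ->
      Delta Am1 A2 A3 (lam m k) *m x m k = 0 /\ vnorm (x m k) = 1)
  (hy : forall m k, (N <= `|k|)%N ->
      DeltaS Am1 A2 A3 (conjc (lam m k)) *m y m k = 0 /\ vnorm (y m k) = 1) :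
  exists C : R, 0 < C /\
    forall m k, (N <= `|k|)%N ->
      (M2sq (phi_v Am1 (lam m k) (x m k)) (phi_f (lam m k) (x m k))
         <= (C ^+ 2)%:E)%E /\
      (M2sq (y m k) (psi_f A2 A3 (lam m k) (y m k))
         <= ((C * cabs (lam m k)) ^+ 2)%:E)%E.
Proof.
have [B hB] := hr_sum.
set rho := 1 + B.
have hnear m k : (N <= `|k|)%N -> cabs (lam m k - tlam (mu m) k) <= rho.
  move=> hk; apply/ltW/(lt_le_trans (hlam_disc m k (leq_trans hN hk))).
  by apply: le_trans (ler_1Dsqr _) _; rewrite lerD2l sqr_le_of_bounded_sums.
have hRe m k : (N <= `|k|)%N -> `|complex.Re (lam m k)| <= rho.
  by move=> hk; apply: le_trans (normr_Re_le_cabs_sub_tlam _ _ _) (hnear m k hk).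
have [D hD] := cabs_lam_lower_bound hnear hlam_nz.
have [a [b [a0 [b0 hpsi]]]] := psi_M2sq_le A2 A3 rho hA2 hA3.
set Cphi := n%:R ^+ 3 * (1 + expR rho * (1 + frob2 Am1)) ^+ 2 + expR rho ^+ 2.
have Cphi0 : 0 <= Cphi by rewrite addr_ge0 ?sqr_ge0 // mulr_ge0 ?sqr_ge0 // exprn_ge0.
set C := 1 + Cphi + (a * D ^+ 2 + b).
have aD0 := mulr_ge0 a0 (sqr_ge0 D).
have C1 : 1 <= C by rewrite /C; lra.
have CC : C <= C ^+ 2 by rewrite expr2 ler_peMr // (le_trans ler01 C1).
exists C; split; first exact: lt_le_trans ltr01 C1.
move=> m k hk; split.
- apply: le_trans (phi_M2sq_le _ _ _ _ (hRe m k hk) (hx m k hk).2) _.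
  by rewrite lee_fin -/Cphi (le_trans _ CC) // /C; lra.
- apply: le_trans (hpsi _ _ (hRe m k hk) (hy m k hk).2) _.
  by rewrite lee_fin (affine_sqr_le_sqr_mul _ _ D) ?hD // /C; lra.
Qed.
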